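(* Let $\mathbb{U}\subseteq\mathbb{R}^{n_u}$ with positive Lebesgue measure, and let $\beta,\gamma\in\mathbb{R}\setminus\{0\}$ with $\beta<\gamma$. (i) Let $g:\mathbb{U}\to\mathbb{R}$ be bounded below with $\int_{\mathbb{U}}\exp(\beta g(u))\,du<\infty$ and $\int_{\mathbb{U}}\exp(-(\gamma-\beta)g(u))\,du<\infty$. Then $$\frac{1}{\beta}\log\int_{\mathbb{U}}\exp(\beta g(u))\,du=\inf_{\rho\in L^{1-\frac{\gamma}{\gamma-\beta}}(\mathbb{U})}\Big\{\frac{1}{\gamma}\log\int_{\mathbb{U}}\exp(\gamma g(u))\rho(u)\,du-\frac{1}{\gamma-\beta}\mathcal{H}_{1-\frac{\gamma}{\gamma-\beta}}(\rho)\Big\},$$ and the unique minimizer of the right-hand side is $\rho(u)=\exp(-(\gamma-\beta)g(u))/\int_{\mathbb{U}}\exp(-(\gamma-\beta)g(u'))\,du'$, $u\in\mathbb{U}$. (ii) Let $h:\mathbb{U}\to\mathbb{R}$ be bounded above with $\int_{\mathbb{U}}\exp(\gamma h(u))\,du<\infty$ and $\int_{\mathbb{U}}\exp((\gamma-\beta)h(u))\,du<\infty$. Then $$\frac{1}{\gamma}\log\int_{\mathbb{U}}\exp(\gamma h(u))\,du=\sup_{\rho\in L^{\frac{\gamma}{\gamma-\beta}}(\mathbb{U})}\Big\{\frac{1}{\beta}\log\int_{\mathbb{U}}\exp(\beta h(u))\rho(u)\,du+\frac{1}{\gamma-\beta}\mathcal{H}_{\frac{\gamma}{\gamma-\beta}}(\rho)\Big\},$$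 and the unique maximizer of the right-hand side is $\rho(u)=\exp((\gamma-\beta)h(u))/\int_{\mathbb{U}}\exp((\gamma-\beta)h(u'))\,du'$, $u\in\mathbb{U}$.
   Context: For a probability density $p$ on $\mathbb{U}$ and $\alpha\in\mathbb{R}\setminus\{0,1\}$ (including $\alpha<0$), the R\'enyi entropy is $\mathcal{H}_\alpha(p)=\frac{1}{\alpha(1-\alpha)}\log\int_{\{u:p(u)>0\}}p(u)^\alpha\,du$. For $\alpha\in\mathbb{R}\setminus\{0,1\}$, $L^{\alpha}(\mathbb{U})=\{\rho$ probability density on $\mathbb{U}:\int_{\mathbb{U}}\rho(u)^{\alpha}du<\infty\}$. *)

From HB Require Import structures.
From mathcomp Require Import all_boot all_order all_algebra.
From mathcomp Require Import all_classical all_reals all_analysis.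
Set Implicit Arguments. Unset Strict Implicit. Unset Printing Implicit Defensive.
Import Order.TTheory GRing.Theory Num.Theory.
Import numFieldNormedType.Exports.
Local Open Scope classical_set_scope.
Local Open Scope ring_scope.

Section Renyi.
Context (R : realType) (d : measure_display) (T : measurableType d)
  (mu : {measure set T -> \bar R}) (U : set T).

(* r^a in the extended reals, with the convention 0^a = +oo for a < 0
   and 0^a = 0 for a > 0 (only used for r >= 0, a <> 0) *)
Definition epow (r a : R) : \bar R :=
  if 0 < r then (r `^ a)%:E else if a < 0 then +oo%E else 0%E.

Definition is_density (rho : T -> R) : Prop :=
  [/\ measurable_fun U rho,
      (forall u, U u -> 0 <= rho u) &
      (\int[mu]_(x in U) (rho x)%:E = 1)%E].

Definition Lalpha (a : R) : set (T -> R) :=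
  [set rho | is_density rho /\ (\int[mu]_(x in U) epow (rho x) a < +oo)%E].

Definition renyi (a : R) (p : T -> R) : \bar R :=
  ((a * (1 - a))^-1)%:E *
  lne (\int[mu]_(x in U `&` [set u | (0 < p u)%R]) ((p x) `^ a)%:E).

End Renyi.

From HB Require Import structures.
From mathcomp Require Import all_boot all_order all_algebra.
From mathcomp Require Import all_classical all_reals all_analysis.
From mathcomp Require Import ring lra.
Import Order.TTheory GRing.Theory Num.Theory.
Import numFieldNormedType.Exports.
Import measurable_realfun.
Local Open Scope classical_set_scope.
Local Open Scope ring_scope.

(* Write w := expR (- (gamma - beta) * g) in (i), w := expR ((gamma - beta) * h)
   in (ii), and a for the Renyi order.  The integrals in the theorem are then
   W := \int w^a and \int w^(a-1) rho, both left-hand sides are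
   +-(gamma - beta)^-1 * (- a^-1 * ln W), and both objectives are
   +-(gamma - beta)^-1 * J rho with
     J rho := (1 - a)^-1 * ln (\int w^(a-1) rho) - H_a(rho)    ([renyi_dual]).
   It remains to show J rho >= - a^-1 * ln W, with equality iff rho = w / \int w
   a.e.  The Bregman divergence D(x, z) = x^a - z^a - a z^(a-1) (x - z) of
   s |-> s^a satisfies a (a - 1) D(x, z) >= 0, with equality iff x = z.
   Integrating it at z = m w, where m := \int w^(a-1) rho / W makes the linear
   term vanish, gives a (a - 1) (\int rho^a - m^a W) >= 0, which is the claim
   after taking logarithms; equality forces rho = m w a.e., and then m = 1 / \int w.
   If \int w^(a-1) rho = +oo, which only happens for a < 1, then J rho = +oo. *)

Section PowerConvexity.
Context {R : realType}.
Implicit Types a s t u v x y z c A B W : R.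

Lemma expR_convex_lt t u v : 0 < t < 1 -> u != v ->
  expR (t * u + (1 - t) * v) < t * expR u + (1 - t) * expR v.
Proof.
move=> /andP[t0 t1] uv; set G := expR (t * u + (1 - t) * v).
have -> : expR u = G * expR ((1 - t) * (u - v)) by rewrite -expRD; congr expR; ring.
have -> : expR v = G * expR (- (t * (u - v))) by rewrite -expRD; congr expR; ring.
have d0 : (1 - t) * (u - v) != 0 by rewrite mulf_neq0 ?subr_eq0 // gt_eqF ?subr_gt0.
have e1 := expR_gt1Dx d0; have e2 := expR_ge1Dx (- (t * (u - v))).
have Gt0 : 0 < G * t by rewrite mulr_gt0 ?expR_gt0.
have Gt1 : 0 < G * (1 - t) by rewrite mulr_gt0 ?expR_gt0 ?subr_gt0.
nra.
Qed.

(* With s = expR t, each sign case of a is a weighted AM-GM inequality for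
   expR whose weighted mean of points is 0 or t. *)
Lemma powR_tangent_leif a s : a != 0 -> a != 1 -> 0 < s ->
  0 <= a * (a - 1) * (s `^ a - 1 - a * (s - 1)) ?= iff (s == 1).
Proof.
move=> a0 a1 s0; apply/leifP; have [->|s1] := eqVneq s 1.
  by rewrite powR1 !subrr mulr0 subr0 mulr0.
rewrite -(lnK s0) -expRM; set t := ln s.
have t0 : t != 0 by apply: contra_neq s1 => t0; rewrite -(lnK s0) -/t t0 expR0.
have [a_lt0|a_ge0] := ltP a 0.
  have a1' : 1 < 1 - a by lra.
  have th : 0 < (1 - a)^-1 < 1 by rewrite invr_gt0 invf_lt1 ?(lt_trans ltr01 a1') ?a1'.
  have tat : t * a != t by rewrite -{2}[t]mulr1 (inj_eq (mulfI t0)).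
  have := expR_convex_lt _ _ _ th tat.
  have -> : (1 - a)^-1 * (t * a) + (1 - (1 - a)^-1) * t = 0.
    by field; rewrite subr_eq0 eq_sym.
  rewrite expR0 -(ltr_pM2l (_ : 0 < 1 - a)); last lra.
  have -> : (1 - a) * ((1 - a)^-1 * expR (t * a) + (1 - (1 - a)^-1) * expR t) =
     expR (t * a) - a * expR t by field; rewrite subr_eq0 eq_sym.
  have : 0 < a * (a - 1) by nra.
  nra.
have a_gt0 : 0 < a by rewrite lt_neqAle eq_sym a0.
have [a_lt1|a_gt1] := ltP a 1.
  have th : 0 < a < 1 by rewrite a_gt0.
  have := expR_convex_lt _ _ _ th t0.
  rewrite mulr0 addr0 expR0 mulr1 (mulrC t).
  have : 0 < a * (1 - a) by nra.
  nra.
have a_gt1' : 1 < a by rewrite lt_neqAle eq_sym a1.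
have th : 0 < a^-1 < 1 by rewrite invr_gt0 invf_lt1 ?a_gt0.
have ta0 : t * a != 0 by rewrite mulf_neq0.
have := expR_convex_lt _ _ _ th ta0.
rewrite mulr0 addr0 expR0 mulr1 mulrCA mulVf ?mulr1 // -(ltr_pM2l a_gt0).
have -> : a * (a^-1 * expR (t * a) + (1 - a^-1)) = expR (t * a) + a - 1 by field.
have : 0 < a * (a - 1) by nra.
nra.
Qed.

Lemma mulr_powRB1 a z : 0 < z -> z `^ (a - 1) * z = z `^ a.
Proof.
move=> z0; rewrite -{2}(powRr1 (ltW z0)) -powRD ?subrK //.
by apply/implyP => _; rewrite gt_eqF.
Qed.

Definition bregman_powR a x z := x `^ a - z `^ a - a * z `^ (a - 1) * (x - z).

Lemma bregman_powR_leif a x z : a != 0 -> a != 1 -> 0 < z -> 0 <= x ->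
  (a < 0 -> 0 < x) -> 0 <= a * (a - 1) * bregman_powR a x z ?= iff (x == z).
Proof.
move=> a0 a1 z0 x0 xpos; have za0 : 0 < z `^ a := powR_gt0 _ z0.
have [x_gt0|x_le0] := ltP 0 x.
  have s0 : 0 < x / z by rewrite divr_gt0.
  have -> : a * (a - 1) * bregman_powR a x z =
      z `^ a * (a * (a - 1) * ((x / z) `^ a - 1 - a * (x / z - 1))).
    rewrite /bregman_powR -{1 2}(divfK (lt0r_neq0 z0) x) (powRM _ (ltW s0) (ltW z0)).
    rewrite -(mulr_powRB1 a _ z0); ring.
  rewrite -[x in x <= _ ?= iff _](mulr0 (z `^ a)) (mono_leif (ler_pM2l za0)).
  have -> : (x == z) = (x / z == 1).
    by rewrite -[x / z == 1](inj_eq (mulIf (lt0r_neq0 z0))) divfK ?mul1r ?lt0r_neq0.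
  exact: powR_tangent_leif.
have x00 : x = 0 by apply/le_anti; rewrite x_le0.
have a_gt0 : 0 < a.
  by rewrite lt_neqAle eq_sym a0 leNgt; apply/negP => /xpos; rewrite x00 ltxx.
apply/leifP; rewrite x00 eq_sym gt_eqF //.
have -> : a * (a - 1) * bregman_powR a 0 z = a * (a - 1) ^+ 2 * z `^ a.
  by rewrite /bregman_powR powR0 // -(mulr_powRB1 a _ z0); ring.
by rewrite mulr_gt0 // mulr_gt0 // exprn_even_gt0 //= subr_eq0.
Qed.

Lemma ln_sub_leif c x y : c != 0 -> 0 < x -> 0 < y -> 0 <= c * (x - y) ->
  0 <= c^-1 * (ln x - ln y) ?= iff (x == y).
Proof.
move=> c0 x0 y0 cxy; apply/leifP; have [->|xy] := eqVneq x y.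
  by rewrite subrr mulr0.
have {}cxy : 0 < c * (x - y) by rewrite lt_neqAle eq_sym mulf_neq0 ?subr_eq0.
have [c_lt0|c_gt0] := ltP c 0.
  have : ln x < ln y by rewrite ltr_ln ?posrE //; nra.
  have : c^-1 < 0 by rewrite invr_lt0.
  nra.
have : ln y < ln x by rewrite ltr_ln ?posrE //; nra.
have : 0 < c^-1 by rewrite invr_gt0 lt_neqAle eq_sym c0.
nra.
Qed.

Lemma renyi_log_leif a A B W : a != 0 -> a != 1 -> 0 < A -> 0 < B -> 0 < W ->
  0 <= a * (a - 1) * (A - (B / W) `^ a * W) ->
  - a^-1 * ln W <= (1 - a)^-1 * ln B - (a * (1 - a))^-1 * ln A
    ?= iff (A == (B / W) `^ a * W).
Proof.
move=> a0 a1 A0 B0 W0 gap_ge0.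
have mW0 : 0 < (B / W) `^ a * W by rewrite mulr_gt0 ?powR_gt0 ?divr_gt0.
have -> : (1 - a)^-1 * ln B - (a * (1 - a))^-1 * ln A = - a^-1 * ln W +
    (a * (a - 1))^-1 * (ln A - ln ((B / W) `^ a * W)).
  rewrite lnM ?posrE ?powR_gt0 ?divr_gt0 // ln_powR lnM ?posrE ?invr_gt0 //.
  by rewrite lnV ?posrE //; field; rewrite !subr_eq0 a0 a1 eq_sym a1.
rewrite -{1}[- a^-1 * ln W]addr0 (mono_leif (lerD2l _)).
by apply: ln_sub_leif; rewrite ?mulf_neq0 ?subr_eq0.
Qed.

End PowerConvexity.

Section AttainedBounds.
Context {R : realType} {X : Type} (S : set X) (f : X -> \bar R) (x0 : X).
Hypothesis Sx0 : S x0.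

Lemma ereal_inf_attained : (forall x, S x -> (f x0 <= f x)%E) ->
  ereal_inf (f @` S) = f x0.
Proof.
move=> f_min; apply/eqP; rewrite eq_le ereal_inf_lbound /=; last by exists x0.
by apply/ereal_infP => _ [x Sx <-]; exact: f_min.
Qed.

Lemma ereal_sup_attained : (forall x, S x -> (f x <= f x0)%E) ->
  ereal_sup (f @` S) = f x0.
Proof.
move=> f_max; apply/eqP; rewrite eq_le ereal_sup_ubound /= ?andbT; last by exists x0.
by apply/ereal_supP => _ [x Sx <-]; exact: f_max.
Qed.

End AttainedBounds.

Definition renyi_dual {R : realType} {d : measure_display} {T : measurableType d}
    (mu : {measure set T -> \bar R}) (U : set T) (a : R) (w rho : T -> R) : \bar R :=
  (((1 - a)^-1)%:E * lne (\int[mu]_(x in U) (w x `^ (a - 1) * rho x)%:E)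
   - renyi mu U a rho)%E.

Section Integrals.
Context {R : realType} {d : measure_display} {T : measurableType d}
  (mu : {measure set T -> \bar R}) (U : set T) (mU : measurable U).
Implicit Types f rho : T -> R.

Lemma ge0_integrable f : measurable_fun U f -> (forall x, U x -> 0 <= f x) ->
  (\int[mu]_(x in U) (f x)%:E < +oo)%E -> mu.-integrable U (EFin \o f).
Proof.
move=> mf f0 foo; apply/integrableP; split; first exact/measurable_EFinP.
by under eq_integral => x /[1!inE] Ux do rewrite /= ger0_norm ?f0 //.
Qed.

Lemma EFin_Rintegral f : mu.-integrable U (EFin \o f) ->
  (\int[mu]_(x in U) f x)%:E = (\int[mu]_(x in U) (f x)%:E)%E.
Proof. by move=> fi; rewrite fineK //; exact: integrable_fin_num. Qed.

Lemma integral_ae_ge0_abs f : measurable_fun U f ->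
  {ae mu, forall x, U x -> 0 <= f x} ->
  (\int[mu]_(x in U) (f x)%:E = \int[mu]_(x in U) `|(f x)%:E|)%E.
Proof.
move=> /measurable_EFinP mf f0; apply: ae_eq_integral => //.
  exact: measurableT_comp (@abse_measurable _ setT) mf.
by apply: filterS f0 => x f0 Ux; rewrite /= ger0_norm ?f0.
Qed.

Lemma Rintegral_ae_ge0 f : mu.-integrable U (EFin \o f) ->
  {ae mu, forall x, U x -> 0 <= f x} -> 0 <= \int[mu]_(x in U) f x.
Proof.
move=> fi f0; rewrite -lee_fin EFin_Rintegral // integral_ae_ge0_abs //.
  exact: integral_ge0.
by move/integrableP : fi => [/measurable_EFinP].
Qed.

Lemma Rintegral_ae_eq0 f : mu.-integrable U (EFin \o f) ->
  {ae mu, forall x, U x -> 0 <= f x} -> \int[mu]_(x in U) f x = 0 ->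
  {ae mu, forall x, U x -> f x = 0}.
Proof.
move=> fi f0 f_eq0; have /integrableP[mf _] := fi.
have : (\int[mu]_(x in U) `|(f x)%:E| = 0)%E.
  by rewrite -integral_ae_ge0_abs -?EFin_Rintegral ?f_eq0 //; exact/measurable_EFinP.
move=> /(ae_eq_integral_abs mu mU mf).
by apply: filterS => x + Ux => /(_ Ux) [].
Qed.

Lemma Rintegral_gt0 f : mu.-integrable U (EFin \o f) ->
  (forall x, U x -> 0 < f x) -> (0 < mu U)%E -> 0 < \int[mu]_(x in U) f x.
Proof.
move=> fi f0 U0; have f0ae : {ae mu, forall x, U x -> 0 <= f x}.
  by apply: aeW => x /f0/ltW.
rewrite lt_neqAle Rintegral_ae_ge0 // andbT eq_sym; apply/eqP.
move=> /(Rintegral_ae_eq0 _ fi f0ae) [N [mN N0 UN]].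
suff : mu U = 0%E by move=> U0'; rewrite U0' ltxx in U0.
apply: (subset_measure0 mU mN) N0 => x Ux; apply: UN => /(_ Ux) fx0.
by have := f0 x Ux; rewrite fx0 ltxx.
Qed.

Lemma Rintegral_density_gt0 f rho : mu.-integrable U (EFin \o f) ->
  (forall x, U x -> 0 <= f x) -> (forall x, U x -> f x = 0 -> rho x = 0) ->
  is_density mu U rho -> 0 < \int[mu]_(x in U) f x.
Proof.
move=> fi f0 frho [mrho _ rho1].
rewrite lt_neqAle Rintegral_ae_ge0 ?andbT //; last exact: aeW.
rewrite eq_sym; apply/eqP => /(Rintegral_ae_eq0 _ fi (aeW _ f0)) fae.
have : (\int[mu]_(x in U) (rho x)%:E = \int[mu]_(x in U) 0)%E.
  apply: ae_eq_integral => //; first exact/measurable_EFinP.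
  by apply: filterS fae => x + Ux => /(_ Ux) /(frho x Ux) ->.
by rewrite rho1 integral0 => /eqP; rewrite onee_eq0.
Qed.

Lemma integrable_expR (c : R) (g : T -> R) : measurable_fun U g ->
  (\int[mu]_(x in U) (expR (c * g x))%:E < +oo)%E ->
  mu.-integrable U (EFin \o (fun x => expR (c * g x))).
Proof.
move=> mg; apply: ge0_integrable => [|x _]; last exact: expR_ge0.
exact: measurableT_comp (measurable_funM (measurable_cst c) mg).
Qed.

Section Lalpha.
Context {a : R} (a0 : a != 0).

Lemma measurable_epow rho : measurable_fun U rho ->
  measurable_fun U (fun x => epow (rho x) a).
Proof.
move=> mrho; apply: (measurableT_comp (f := fun r => epow r a)) => //.
apply: measurable_fun_ifT; [exact: measurable_fun_ltr|exact: measurableT_comp|].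
exact: measurable_cst.
Qed.

Lemma Lalpha_integrable_powR rho : Lalpha mu U a rho ->
  mu.-integrable U (EFin \o (fun x => rho x `^ a)).
Proof.
move=> [[mrho rho0 _] rho_fin].
have mrhoa := measurableT_comp (measurable_powR a) mrho.
apply: ge0_integrable => // [x _|]; first exact: powR_ge0.
apply: le_lt_trans rho_fin; apply: ge0_le_integral => //.
- by move=> x _; rewrite lee_fin powR_ge0.
- exact/measurable_EFinP.
- exact: measurable_epow.
move=> x Ux; rewrite /epow; case: ifPn => // rho_le0.
have -> : rho x = 0 by apply/le_anti; rewrite rho0 // leNgt rho_le0.
by rewrite powR0 //; case: ifP => _; rewrite ?leey.
Qed.

Lemma Lalpha_powR_gt0 rho : Lalpha mu U a rho ->
  0 < \int[mu]_(x in U) rho x `^ a.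
Proof.
move=> Lrho; apply: (Rintegral_density_gt0 _ rho (Lalpha_integrable_powR _ Lrho)).
- by move=> x _; exact: powR_ge0.
- by move=> x _ /powR_eq0_eq0.
- by case: Lrho.
Qed.

Lemma renyiE rho : Lalpha mu U a rho ->
  renyi mu U a rho = ((a * (1 - a))^-1 * ln (\int[mu]_(x in U) rho x `^ a))%:E.
Proof.
move=> Lrho; have [[_ rho0 _] _] := Lrho.
rewrite /renyi EFinM -lne_EFin ?Lalpha_powR_gt0 //.
rewrite (EFin_Rintegral _ (Lalpha_integrable_powR _ Lrho)) integral_mkcondr.
congr (_ * lne _)%E; apply: eq_integral => x /[1!inE] Ux; rewrite patchE.
case: ifPn => //; rewrite notin_setE /= => /negP; rewrite -leNgt => rho_le0.
have -> : rho x = 0 by apply/le_anti; rewrite rho_le0 rho0.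
by rewrite powR0.
Qed.

Lemma Lalpha_ae_gt0 rho : a < 0 -> Lalpha mu U a rho ->
  {ae mu, forall x, U x -> 0 < rho x}.
Proof.
move=> a_lt0 [[mrho _ _] rho_fin].
set N := U `&` rho @^-1` `]-oo, 0].
have mN : measurable N by apply: mrho => //; exact: measurable_itv.
exists N; split => //; last first.
  move=> x /not_implyP[Ux /negP]; rewrite -leNgt => rho_le0.
  by split; rewrite //= in_itv.
have epowN x : N x -> epow (rho x) a = +oo%E.
  by move=> [_ /=]; rewrite in_itv /= /epow ltNge => ->; rewrite a_lt0.
have : (\int[mu]_(x in N) epow (rho x) a <= \int[mu]_(x in U) epow (rho x) a)%E.
  apply: ge0_subset_integral => //; first exact: measurable_epow.
    move=> x _; rewrite /epow; case: ifPn => _; last by case: ifPn.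
    by rewrite lee_fin powR_ge0.
  by move=> x [].
rewrite (eq_integral (fun _ => +oo%E)) => [|x /[1!inE] /epowN //].
rewrite integral_cst // => le_oo; apply/eqP; apply: contraTT rho_fin => N0.
by rewrite -leNgt (le_trans _ le_oo) // gt0_mulye // lt0e N0 measure_ge0.
Qed.

Lemma mule_renyi_dual (c : R) (w rho : T -> R) : Lalpha mu U a rho ->
  (c%:E * renyi_dual mu U a w rho = (c / (1 - a))%:E *
    lne (\int[mu]_(x in U) (w x `^ (a - 1) * rho x)%:E) - c%:E * renyi mu U a rho)%E.
Proof.
by move=> Lrho; rewrite /renyi_dual renyiE // muleBr ?fin_num_adde_defl // muleA.
Qed.

End Lalpha.

Section Variational.
Context (hU : (0 < mu U)%E) {a : R} (a0 : a != 0) (a1 : a != 1) {w : T -> R}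
  (mw : measurable_fun U w) (w_gt0 : forall x, U x -> 0 < w x)
  (iw : mu.-integrable U (EFin \o w))
  (iwa : mu.-integrable U (EFin \o (fun x => w x `^ a))).

Local Notation C := (\int[mu]_(x in U) w x).
Local Notation W := (\int[mu]_(x in U) w x `^ a).
Local Notation rho_star := (fun x => w x / C).

Let C_gt0 : 0 < C. Proof. exact: Rintegral_gt0. Qed.

Let W_gt0 : 0 < W. Proof. by apply: Rintegral_gt0 => // x /w_gt0/powR_gt0. Qed.

Let mw_powR b : measurable_fun U (fun x => w x `^ b).
Proof. exact: measurableT_comp (measurable_powR b) mw. Qed.

Section Density.
Variable rho : T -> R.
Hypothesis Lrho : Lalpha mu U a rho.

Local Notation A := (\int[mu]_(x in U) rho x `^ a).

Let rho_ge0 : forall x, U x -> 0 <= rho x. Proof. by case: Lrho => -[]. Qed.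
Let mrho : measurable_fun U rho. Proof. by case: Lrho => -[]. Qed.
Let iA := Lalpha_integrable_powR a0 _ Lrho.
Let A_gt0 : 0 < A := Lalpha_powR_gt0 a0 _ Lrho.

Let cross_ge0 x : U x -> 0 <= w x `^ (a - 1) * rho x.
Proof. by move=> Ux; rewrite mulr_ge0 ?powR_ge0 ?rho_ge0. Qed.

Let mcross : measurable_fun U (fun x => w x `^ (a - 1) * rho x).
Proof. exact: measurable_funM. Qed.

(* For a > 1 the tangent inequality at [w x] bounds the integrand by
   [(rho x `^ a + (a - 1) * w x `^ a) / a]. *)
Lemma integrable_cross : 1 < a ->
  mu.-integrable U (EFin \o (fun x => w x `^ (a - 1) * rho x)).
Proof.
move=> a_gt1; have a_gt0 : 0 < a := lt_trans ltr01 a_gt1.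
apply: (le_integrable mU _ _ (integrableZl mU a^-1 (integrableD mU iA
  (integrableZl mU (a - 1) iwa)))); first exact/measurable_EFinP.
move=> x Ux /=; rewrite lee_fin ger0_norm ?cross_ge0 //; apply: le_trans (ler_norm _).
have a_lt0_rho : a < 0 -> 0 < rho x by rewrite ltNge (ltW a_gt0).
have [+ _] := bregman_powR_leif _ _ _ a0 a1 (w_gt0 _ Ux) (rho_ge0 _ Ux) a_lt0_rho.
rewrite /bregman_powR -(mulr_powRB1 a _ (w_gt0 _ Ux)) => h.
rewrite -(ler_pM2l a_gt0) mulVKf ?gt_eqF //.
have : 0 < a * (a - 1) by rewrite mulr_gt0 ?subr_gt0.
nra.
Qed.

Lemma cross_integral_pinfty :
  ~ mu.-integrable U (EFin \o (fun x => w x `^ (a - 1) * rho x)) ->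
  (\int[mu]_(x in U) (w x `^ (a - 1) * rho x)%:E = +oo)%E /\ a < 1.
Proof.
move=> niB; split.
  move: (leey (\int[mu]_(x in U) (w x `^ (a - 1) * rho x)%:E)).
  by rewrite le_eqVlt => /predU1P[//|/(ge0_integrable _ mcross cross_ge0)/niB []].
rewrite ltNge le_eqVlt eq_sym (negbTE a1) /=.
by apply/negP => /integrable_cross.
Qed.

Section FiniteCross.
Hypothesis iB : mu.-integrable U (EFin \o (fun x => w x `^ (a - 1) * rho x)).

Local Notation B := (\int[mu]_(x in U) (w x `^ (a - 1) * rho x)).
Local Notation m := (B / W).

Let B_gt0 : 0 < B.
Proof.
apply: (Rintegral_density_gt0 _ rho iB cross_ge0); last by case: Lrho.
by move=> x Ux /eqP; rewrite mulf_eq0 gt_eqF ?powR_gt0 ?w_gt0 //= => /eqP.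
Qed.

Let m_gt0 : 0 < m. Proof. exact: divr_gt0. Qed.

Let bregman_ae : {ae mu, forall x, U x ->
  0 <= a * (a - 1) * bregman_powR a (rho x) (m * w x) ?= iff (rho x == m * w x)}.
Proof.
have rho_gt0 : {ae mu, forall x, U x -> a < 0 -> 0 < rho x}.
  have [a_lt0|a_ge0] := ltP a 0.
    by apply: filterS (Lalpha_ae_gt0 _ a_lt0 Lrho) => x + Ux _ => /(_ Ux).
  exact: aeW.
apply: filterS rho_gt0 => x rho_gt0 Ux.
exact: bregman_powR_leif _ _ _ a0 a1 (mulr_gt0 m_gt0 (w_gt0 _ Ux)) (rho_ge0 _ Ux)
  (rho_gt0 Ux).
Qed.

Let bregmanE : {in U, forall x,
  a * (a - 1) * bregman_powR a (rho x) (m * w x) =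
  a * (a - 1) * rho x `^ a - a * (a - 1) * m `^ a * w x `^ a
  - a * (a - 1) * a * m `^ (a - 1) * (w x `^ (a - 1) * rho x - m * w x `^ a)}.
Proof.
move=> x /set_mem Ux; have mwE b := powRM b (ltW m_gt0) (ltW (w_gt0 _ Ux)).
rewrite /bregman_powR !mwE -(mulr_powRB1 a _ m_gt0).
by rewrite -(mulr_powRB1 a _ (w_gt0 _ Ux)); ring.
Qed.

Let iA' := integrableZl mU (a * (a - 1)) iA.
Let iW' := integrableZl mU (a * (a - 1) * m `^ a) iwa.
Let iAW := integrableB mU iA' iW'.
Let imW := integrableZl mU m iwa.
Let iBW := integrableB mU iB imW.
Let iBW' := integrableZl mU (a * (a - 1) * a * m `^ (a - 1)) iBW.

Let integrable_bregman : mu.-integrable U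
  (EFin \o (fun x => a * (a - 1) * bregman_powR a (rho x) (m * w x))).
Proof.
apply: eq_integrable (integrableB mU iAW iBW') => // x Ux.
by rewrite /= bregmanE.
Qed.

Lemma Rintegral_bregman :
  \int[mu]_(x in U) (a * (a - 1) * bregman_powR a (rho x) (m * w x)) =
  a * (a - 1) * (A - m `^ a * W).
Proof.
rewrite (eq_Rintegral _ bregmanE) !RintegralB // !RintegralZl // RintegralB //.
rewrite RintegralZl // divfK ?(lt0r_neq0 W_gt0) //.
by rewrite subrr mulr0 subr0 [RHS]mulrBr mulrA.
Qed.

Lemma renyi_dualE :
  renyi_dual mu U a w rho = ((1 - a)^-1 * ln B - (a * (1 - a))^-1 * ln A)%:E.
Proof.
by rewrite /renyi_dual -EFin_Rintegral // lne_EFin // renyiE // -EFinM -EFinB.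
Qed.

Lemma renyi_dual_leif : - a^-1 * ln W <=
  (1 - a)^-1 * ln B - (a * (1 - a))^-1 * ln A ?= iff (A == m `^ a * W).
Proof.
apply: (renyi_log_leif _ _ _ _ a0 a1 A_gt0 B_gt0 W_gt0); rewrite -Rintegral_bregman.
apply: Rintegral_ae_ge0 => //.
by apply: filterS bregman_ae => x + Ux => /(_ Ux) [].
Qed.

Lemma ae_rho_star_of_eq : A = m `^ a * W ->
  {ae mu, forall x, U x -> rho x = rho_star x}.
Proof.
move=> AE; have bregman0 : {ae mu, forall x, U x ->
    a * (a - 1) * bregman_powR a (rho x) (m * w x) = 0}.
  apply: Rintegral_ae_eq0 => //; last by rewrite Rintegral_bregman AE subrr mulr0.
  by apply: filterS bregman_ae => x + Ux => /(_ Ux) [].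
have rhoE : {ae mu, forall x, U x -> rho x = m * w x}.
  apply: filterS2 bregman_ae bregman0 => x eqC eq0 Ux; apply/eqP.
  by rewrite -(eqC Ux).2 (eq0 Ux).
have mE : m = C^-1.
  have : (\int[mu]_(x in U) (rho x)%:E = \int[mu]_(x in U) (m * w x)%:E)%E.
    apply: ae_eq_integral => //.
    - exact/measurable_EFinP.
    - exact/measurable_EFinP/measurable_funM.
    - by apply: filterS rhoE => x + Ux => /(_ Ux) ->.
  case: Lrho => -[_ _ ->] _.
  have imw := integrableZl mU m iw.
  rewrite -EFin_Rintegral // RintegralZl // => -[/esym mC].
  by apply: (mulIf (lt0r_neq0 C_gt0)); rewrite mC mulVf // lt0r_neq0.
by apply: filterS rhoE => x + Ux => /(_ Ux) ->; rewrite mE mulrC.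
Qed.

End FiniteCross.

Let renyi_dual_pinfty :
  ~ mu.-integrable U (EFin \o (fun x => w x `^ (a - 1) * rho x)) ->
  renyi_dual mu U a w rho = +oo%E.
Proof.
move=> /cross_integral_pinfty[B_oo a_lt1].
by rewrite /renyi_dual B_oo renyiE //= gt0_muley // lte_fin invr_gt0 subr_gt0.
Qed.

Lemma renyi_dual_ge : ((- a^-1 * ln W)%:E <= renyi_dual mu U a w rho)%E.
Proof.
have [iB|niB] := pselect (mu.-integrable U (EFin \o (fun x => w x `^ (a - 1) * rho x))).
  by rewrite renyi_dualE // lee_fin (renyi_dual_leif iB).1.
by rewrite renyi_dual_pinfty // leey.
Qed.

Lemma renyi_dual_le_ae : (renyi_dual mu U a w rho <= (- a^-1 * ln W)%:E)%E ->
  {ae mu, forall x, U x -> rho x = rho_star x}.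
Proof.
have [iB|niB] := pselect (mu.-integrable U (EFin \o (fun x => w x `^ (a - 1) * rho x))).
  rewrite renyi_dualE // lee_fin => J_le; apply: ae_rho_star_of_eq => //.
  by apply/eqP; rewrite -(renyi_dual_leif iB).2 eq_le J_le (renyi_dual_leif iB).1.
by rewrite renyi_dual_pinfty.
Qed.

End Density.

Let rho_star_gt0 x : U x -> 0 < rho_star x.
Proof. by move=> Ux; rewrite divr_gt0 ?w_gt0. Qed.

Let irho_star : mu.-integrable U (EFin \o rho_star).
Proof.
by apply: eq_integrable (integrableZl mU C^-1 iw) => // x _; rewrite /= mulrC.
Qed.

Let integral_powR_rho_star :
  (\int[mu]_(x in U) ((w x / C) `^ a)%:E = (C^-1 `^ a * W)%:E)%E.
Proof.
rewrite (eq_integral (fun x => (C^-1 `^ a * w x `^ a)%:E)).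
  have iCW := integrableZl mU (C^-1 `^ a) iwa.
  by rewrite -EFin_Rintegral ?RintegralZl.
move=> x /[1!inE] Ux.
by rewrite powRM ?invr_ge0 ?(ltW C_gt0) ?(ltW (w_gt0 _ Ux)) // mulrC.
Qed.

Lemma Lalpha_rho_star : Lalpha mu U a rho_star.
Proof.
split; first split.
- exact: measurable_funM mw (measurable_cst _).
- by move=> x /rho_star_gt0/ltW.
- by rewrite -EFin_Rintegral ?RintegralZr ?divff ?lt0r_neq0.
rewrite (eq_integral (fun x => ((w x / C) `^ a)%:E)).
  by rewrite integral_powR_rho_star ltry.
by move=> x /[1!inE] Ux; rewrite /epow rho_star_gt0.
Qed.

Lemma renyi_dual_rho_star : renyi_dual mu U a w rho_star = (- a^-1 * ln W)%:E.
Proof.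
have cross_rho_star : {in U, forall x, C^-1 * w x `^ a = w x `^ (a - 1) * (w x / C)}.
  by move=> x /set_mem Ux; rewrite -(mulr_powRB1 a _ (w_gt0 _ Ux)); ring.
have iB : mu.-integrable U (EFin \o (fun x => w x `^ (a - 1) * (w x / C))).
  apply: eq_integrable (integrableZl mU C^-1 iwa) => // x Ux.
  by rewrite /= -cross_rho_star.
rewrite (renyi_dualE _ Lalpha_rho_star iB).
congr EFin; apply/esym/eqP; rewrite (renyi_dual_leif _ Lalpha_rho_star iB).2.
have -> : \int[mu]_(x in U) (w x / C) `^ a = C^-1 `^ a * W.
  by rewrite /Rintegral integral_powR_rho_star.
by rewrite -(eq_Rintegral _ cross_rho_star) RintegralZl // mulfK ?lt0r_neq0.
Qed.

Lemma renyi_dual_inf (c : R) (obj : (T -> R) -> \bar R) : 0 < c ->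
    (forall rho, Lalpha mu U a rho -> obj rho = (c%:E * renyi_dual mu U a w rho)%E) ->
  let S := [set obj rho | rho in Lalpha mu U a] in
  [/\ (c * (- a^-1 * ln W))%:E = ereal_inf S, Lalpha mu U a rho_star,
    obj rho_star = ereal_inf S &
    forall rho, Lalpha mu U a rho -> obj rho = ereal_inf S ->
      {ae mu, forall x, U x -> rho x = rho_star x}].
Proof.
move=> c_gt0 objE S; have Lstar := Lalpha_rho_star.
have obj_star : obj rho_star = (c * (- a^-1 * ln W))%:E.
  by rewrite objE // renyi_dual_rho_star.
have infE : ereal_inf S = obj rho_star.
  apply: ereal_inf_attained => // rho Lrho.
  by rewrite obj_star objE // EFinM lee_pmul2l // renyi_dual_ge.
split=> [|//||rho Lrho]; rewrite infE ?obj_star //.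
rewrite objE // EFinM => /eqP; rewrite eq_le lee_pmul2l // => /andP[le _].
exact: renyi_dual_le_ae.
Qed.

Lemma renyi_dual_sup (c : R) (obj : (T -> R) -> \bar R) : 0 < c ->
    (forall rho, Lalpha mu U a rho ->
      obj rho = ((- c)%:E * renyi_dual mu U a w rho)%E) ->
  let S := [set obj rho | rho in Lalpha mu U a] in
  [/\ (- c * (- a^-1 * ln W))%:E = ereal_sup S, Lalpha mu U a rho_star,
    obj rho_star = ereal_sup S &
    forall rho, Lalpha mu U a rho -> obj rho = ereal_sup S ->
      {ae mu, forall x, U x -> rho x = rho_star x}].
Proof.
move=> c_gt0 objE S; have Lstar := Lalpha_rho_star.
have obj_star : obj rho_star = (- c * (- a^-1 * ln W))%:E.
  by rewrite objE // renyi_dual_rho_star.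
have supE : ereal_sup S = obj rho_star.
  apply: ereal_sup_attained => // rho Lrho.
  by rewrite obj_star objE // EFinM !EFinN !mulNe leeN2 lee_pmul2l // renyi_dual_ge.
split=> [|//||rho Lrho]; rewrite supE ?obj_star //.
rewrite objE // EFinM EFinN !mulNe => /eqP; rewrite eq_le !leeN2 !lee_pmul2l //.
by move=> /andP[_ le]; exact: renyi_dual_le_ae.
Qed.

End Variational.

Lemma renyi_variational_inf (beta gamma : R) (g : T -> R) :
  (0 < mu U)%E -> beta != 0 -> gamma != 0 -> beta < gamma -> measurable_fun U g ->
  (\int[mu]_(x in U) (expR (beta * g x))%:E < +oo)%E ->
  (\int[mu]_(x in U) (expR (- (gamma - beta) * g x))%:E < +oo)%E ->
  let a := 1 - gamma / (gamma - beta) in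
  let obj := fun rho : T -> R =>
    ((gamma^-1)%:E * lne (\int[mu]_(x in U) (expR (gamma * g x) * rho x)%:E)
     - ((gamma - beta)^-1)%:E * renyi mu U a rho)%E in
  let rhostar := fun u => expR (- (gamma - beta) * g u) /
    fine (\int[mu]_(x in U) (expR (- (gamma - beta) * g x))%:E) in
  ((beta^-1)%:E * lne (\int[mu]_(x in U) (expR (beta * g x))%:E)
     = ereal_inf [set obj rho | rho in Lalpha mu U a])%E
  /\ Lalpha mu U a rhostar
  /\ obj rhostar = ereal_inf [set obj rho | rho in Lalpha mu U a]
  /\ (forall rho, Lalpha mu U a rho ->
        obj rho = ereal_inf [set obj rho | rho in Lalpha mu U a] ->
        {ae mu, forall u, U u -> rho u = rhostar u}).
Proof.
move=> hU b0 g0 bg mg ib ik a obj rhostar.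
have k_gt0 : 0 < gamma - beta by rewrite subr_gt0.
have k0 : gamma - beta != 0 := lt0r_neq0 k_gt0.
have c_gt0 : 0 < (gamma - beta)^-1 by rewrite invr_gt0.
pose w x := expR (- (gamma - beta) * g x).
have wE b x : w x `^ b = expR (- (gamma - beta) * b * g x) by rewrite /w -expRM mulrAC.
have waE x : w x `^ a = expR (beta * g x).
  by rewrite wE (_ : - (gamma - beta) * a = beta) // /a; field.
have wa1E x : w x `^ (a - 1) = expR (gamma * g x).
  by rewrite wE (_ : - (gamma - beta) * (a - 1) = gamma) // /a; field.
have a0 : a != 0.
  have -> : a = - beta / (gamma - beta) by rewrite /a; field.
  by rewrite mulf_neq0 ?oppr_eq0 ?invr_eq0.
have a1 : a != 1.
  by rewrite /a -subr_eq0 addrAC subrr add0r oppr_eq0 mulf_neq0 ?invr_eq0.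
have mw : measurable_fun U w by exact: measurableT_comp (measurable_funM _ mg).
have iwa : mu.-integrable U (EFin \o (fun x => w x `^ a)).
  by apply: eq_integrable (integrable_expR _ _ mg ib) => // x _; rewrite /= waE.
have objE rho : Lalpha mu U a rho ->
    obj rho = (((gamma - beta)^-1)%:E * renyi_dual mu U a w rho)%E.
  move=> Lrho; rewrite mule_renyi_dual //; congr (_%:E * lne _ - _)%E.
    by rewrite /a; field; rewrite k0 subKr g0.
  by apply: eq_integral => x _; rewrite wa1E.
have [<- Lstar obj_star uniq] := renyi_dual_inf hU a0 a1 mw (fun x _ => expR_gt0 _)
  (integrable_expR _ _ mg ik) iwa _ _ c_gt0 objE.
have ib' := integrable_expR _ _ mg ib.
have Wb_gt0 : 0 < \int[mu]_(x in U) expR (beta * g x).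
  by apply: Rintegral_gt0 => // x _; exact: expR_gt0.
have coefE : beta^-1 = (gamma - beta)^-1 * - a^-1.
  by rewrite /a; field; rewrite k0 addrAC subrr add0r oppr_eq0 b0.
have lhsE : ((beta^-1)%:E * lne (\int[mu]_(x in U) (expR (beta * g x))%:E) =
    ((gamma - beta)^-1 * (- a^-1 * ln (\int[mu]_(x in U) w x `^ a)))%:E)%E.
  rewrite (eq_Rintegral _ (fun x _ => waE x)) -EFin_Rintegral // lne_EFin //.
  by rewrite -EFinM coefE mulrA.
by rewrite lhsE; split; [|split; [|split]].
Qed.

Lemma renyi_variational_sup (beta gamma : R) (h : T -> R) :
  (0 < mu U)%E -> beta != 0 -> gamma != 0 -> beta < gamma -> measurable_fun U h ->
  (\int[mu]_(x in U) (expR (gamma * h x))%:E < +oo)%E ->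
  (\int[mu]_(x in U) (expR ((gamma - beta) * h x))%:E < +oo)%E ->
  let a := gamma / (gamma - beta) in
  let obj := fun rho : T -> R =>
    ((beta^-1)%:E * lne (\int[mu]_(x in U) (expR (beta * h x) * rho x)%:E)
     + ((gamma - beta)^-1)%:E * renyi mu U a rho)%E in
  let rhostar := fun u => expR ((gamma - beta) * h u) /
    fine (\int[mu]_(x in U) (expR ((gamma - beta) * h x))%:E) in
  ((gamma^-1)%:E * lne (\int[mu]_(x in U) (expR (gamma * h x))%:E)
     = ereal_sup [set obj rho | rho in Lalpha mu U a])%E
  /\ Lalpha mu U a rhostar
  /\ obj rhostar = ereal_sup [set obj rho | rho in Lalpha mu U a]
  /\ (forall rho, Lalpha mu U a rho ->
        obj rho = ereal_sup [set obj rho | rho in Lalpha mu U a] ->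
        {ae mu, forall u, U u -> rho u = rhostar u}).
Proof.
move=> hU b0 g0 bg mh ig ik a obj rhostar.
have k_gt0 : 0 < gamma - beta by rewrite subr_gt0.
have k0 : gamma - beta != 0 := lt0r_neq0 k_gt0.
have c_gt0 : 0 < (gamma - beta)^-1 by rewrite invr_gt0.
pose w x := expR ((gamma - beta) * h x).
have wE b x : w x `^ b = expR ((gamma - beta) * b * h x) by rewrite /w -expRM mulrAC.
have waE x : w x `^ a = expR (gamma * h x).
  by rewrite wE (_ : (gamma - beta) * a = gamma) // /a; field.
have wa1E x : w x `^ (a - 1) = expR (beta * h x).
  by rewrite wE (_ : (gamma - beta) * (a - 1) = beta) // /a; field.
have a0 : a != 0 by rewrite mulf_neq0 ?invr_eq0.
have a1 : a != 1.
  rewrite -subr_eq0 (_ : a - 1 = beta / (gamma - beta)) ?mulf_neq0 ?invr_eq0 //.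
  by rewrite /a; field.
have mw : measurable_fun U w by exact: measurableT_comp (measurable_funM _ mh).
have iwa : mu.-integrable U (EFin \o (fun x => w x `^ a)).
  by apply: eq_integrable (integrable_expR _ _ mh ig) => // x _; rewrite /= waE.
have objE rho : Lalpha mu U a rho ->
    obj rho = ((- (gamma - beta)^-1)%:E * renyi_dual mu U a w rho)%E.
  move=> Lrho; rewrite mule_renyi_dual // EFinN mulNe oppeK.
  congr (_%:E * lne _ + _)%E.
    by rewrite /a; field; rewrite k0 addrAC subrr add0r oppr_eq0 b0.
  by apply: eq_integral => x _; rewrite wa1E.
have [<- Lstar obj_star uniq] := renyi_dual_sup hU a0 a1 mw (fun x _ => expR_gt0 _)
  (integrable_expR _ _ mh ik) iwa _ _ c_gt0 objE.
have ig' := integrable_expR _ _ mh ig.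
have Wg_gt0 : 0 < \int[mu]_(x in U) expR (gamma * h x).
  by apply: Rintegral_gt0 => // x _; exact: expR_gt0.
have coefE : gamma^-1 = - (gamma - beta)^-1 * - a^-1.
  by rewrite /a; field; rewrite k0 g0.
have lhsE : ((gamma^-1)%:E * lne (\int[mu]_(x in U) (expR (gamma * h x))%:E) =
    (- (gamma - beta)^-1 * (- a^-1 * ln (\int[mu]_(x in U) w x `^ a)))%:E)%E.
  rewrite (eq_Rintegral _ (fun x _ => waE x)) -EFin_Rintegral // lne_EFin //.
  by rewrite -EFinM coefE mulrA.
by rewrite lhsE; split; [|split; [|split]].
Qed.

End Integrals.

Theorem lemma2 (R : realType) (d : measure_display) (T : measurableType d)
  (mu : {measure set T -> \bar R}) (U : set T)
  (mU : measurable U) (hU : (0 < mu U)%E)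
  (beta gamma : R) (hb : beta != 0) (hg : gamma != 0) (hbg : beta < gamma) :
  (* (i) *)
  (forall g : T -> R, measurable_fun U g ->
     (exists M : R, forall u, U u -> M <= g u) ->
     (\int[mu]_(x in U) (expR (beta * g x))%:E < +oo)%E ->
     (\int[mu]_(x in U) (expR (- (gamma - beta) * g x))%:E < +oo)%E ->
     let a := 1 - gamma / (gamma - beta) in
     let obj := fun rho : T -> R =>
       ((gamma^-1)%:E * lne (\int[mu]_(x in U) (expR (gamma * g x) * rho x)%:E)
        - ((gamma - beta)^-1)%:E * renyi mu U a rho)%E in
     let rhostar := fun u => expR (- (gamma - beta) * g u) /
        fine (\int[mu]_(x in U) (expR (- (gamma - beta) * g x))%:E) in
     ((beta^-1)%:E * lne (\int[mu]_(x in U) (expR (beta * g x))%:E)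
        = ereal_inf [set obj rho | rho in Lalpha mu U a])%E
     /\ Lalpha mu U a rhostar
     /\ obj rhostar = ereal_inf [set obj rho | rho in Lalpha mu U a]
     /\ (forall rho, Lalpha mu U a rho ->
           obj rho = ereal_inf [set obj rho | rho in Lalpha mu U a] ->
           {ae mu, forall u, U u -> rho u = rhostar u}))
  /\
  (* (ii) *)
  (forall h : T -> R, measurable_fun U h ->
     (exists M : R, forall u, U u -> h u <= M) ->
     (\int[mu]_(x in U) (expR (gamma * h x))%:E < +oo)%E ->
     (\int[mu]_(x in U) (expR ((gamma - beta) * h x))%:E < +oo)%E ->
     let a := gamma / (gamma - beta) in
     let obj := fun rho : T -> R =>
       ((beta^-1)%:E * lne (\int[mu]_(x in U) (expR (beta * h x) * rho x)%:E)
        + ((gamma - beta)^-1)%:E * renyi mu U a rho)%E in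
     let rhostar := fun u => expR ((gamma - beta) * h u) /
        fine (\int[mu]_(x in U) (expR ((gamma - beta) * h x))%:E) in
     ((gamma^-1)%:E * lne (\int[mu]_(x in U) (expR (gamma * h x))%:E)
        = ereal_sup [set obj rho | rho in Lalpha mu U a])%E
     /\ Lalpha mu U a rhostar
     /\ obj rhostar = ereal_sup [set obj rho | rho in Lalpha mu U a]
     /\ (forall rho, Lalpha mu U a rho ->
           obj rho = ereal_sup [set obj rho | rho in Lalpha mu U a] ->
           {ae mu, forall u, U u -> rho u = rhostar u})).
Proof.
split=> [g mg _|h mh _].
- exact: renyi_variational_inf.
- exact: renyi_variational_sup.
Qed.
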